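(* Let $q$ be a prime power, $n\ge 2$, $K=\mathbb{F}_{q^n}$, $d=\frac{q^n-1}{q-1}$, and for $1\le i\le n-1$ let $E_{i,\mathrm{Kum}}=K(x,y)$ with $y^d=s_{n,i}(x)$. Then $E_{i,\mathrm{Kum}}\cong E_{n-i,\mathrm{Kum}}$ as function fields over $K$.
   Context: For a prime power $q$ and integers $n\ge 1$, $0\le i\le n$, the $i$-th $(n,q)$-elementary symmetric polynomial is $s_{n,i}(t)=\sum_{0\le j_1<\dots<j_i\le n-1} t^{q^{j_1}+\dots+q^{j_i}}\in\mathbb{F}_p[t]$. *)

From HB Require Import structures.
From mathcomp Require Import all_boot all_order all_algebra all_field.
Set Implicit Arguments. Unset Strict Implicit. Unset Printing Implicit Defensive.
Import GRing.Theory.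
Local Open Scope ring_scope.

Definition sym_q (K : nzRingType) (q n i : nat) : {poly K} :=
  \sum_(S : {set 'I_n} | #|S| == i) 'X^(\sum_(j in S) q ^ j)%N.

Definition kum_deg (q n : nat) : nat := ((q ^ n - 1) %/ (q - 1))%N.

Definition kummer_poly (K : fieldType) (q n i : nat) : {poly {fraction {poly K}}} :=
  'X^(kum_deg q n) - (FracField.tofrac (sym_q K q n i))%:P.

(* The function field E_{i,Kum} = K(x,y), y^d = s_{n,i}(x), realised as
   K(x)[Y]/(Y^d - s_{n,i}(x)); a proof of irreducibility is needed to get
   the field structure. *)
Definition kumF (K : fieldType) (q n i : nat)
  (mi : monic_irreducible_poly (kummer_poly K q n i)) : predArgType :=
  {poly %/ kummer_poly K q n i with mi}.

Definition kum_const (K : fieldType) (q n i : nat)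
  (mi : monic_irreducible_poly (kummer_poly K q n i)) (c : K) : kumF mi :=
  in_qpoly (kummer_poly K q n i) (FracField.tofrac (c%:P))%:P.

From HB Require Import structures.
From mathcomp Require Import all_boot all_order all_algebra all_field.
From mathcomp Require Import zify.
Set Implicit Arguments. Unset Strict Implicit. Unset Printing Implicit Defensive.
Import GRing.Theory.
Local Open Scope ring_scope.

(* The substitution x |-> 1/x is an involutive automorphism sigma of K(x) fixing
   K, and sigma(s_{n,i}(x)) = x^-d s_{n,n-i}(x): complementing the index set S of
   a monomial of s_{n,i} turns its exponent e into d - e. Hence y/x is a d-th
   root of sigma(s_{n,i}(x)) in E_{n-i}, so x |-> 1/x, y |-> y/x defines a
   K-morphism E_i -> E_{n-i}, and the same recipe from E_{n-i} back to E_i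
   inverts it. *)

Section FractionLift.
Variables (R : idomainType) (L : fieldType) (phi : {rmorphism R -> L}).
Local Open Scope quotient_scope.
Local Notation tf := (@FracField.tofrac R).

Lemma tofrac_numden (x : {fraction R}) : x = tf \n_(repr x) / tf \d_(repr x).
Proof.
have num_eq (r : {ratio R}) : tf \n_r = \pi_{fraction R} r * tf \d_r.
  unlock FracField.tofrac; rewrite -[RHS]/(FracField.mul _ _) -FracField.pi_mul.
  apply/eqmodP; rewrite /= FracField.equivfE /FracField.mulf /=.
  by rewrite !numden_Ratio ?mulf_neq0 ?oner_neq0 ?denom_ratioP // mulr1 mul1r.
by rewrite num_eq reprK mulfK // tofrac_eq0; apply: denom_ratioP.
Qed.

Lemma fraction_ind (P : {fraction R} -> Prop) :
  (forall a b, b != 0 -> P (tf a / tf b)) -> forall x, P x.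
Proof. by move=> Pab x; rewrite [x]tofrac_numden; apply/Pab/denom_ratioP. Qed.

Hypothesis phi_inj : injective phi.

(* The dummy argument lets the HB instances below survive the closing of the
   section, as instances for [frac_lift phi_inj]; [qf_lift] uses the same device. *)
Definition frac_lift of injective phi :=
  fun x : {fraction R} => phi \n_(repr x) / phi \d_(repr x).
Local Notation lift := (frac_lift phi_inj).

Lemma phi_neq0 a : a != 0 -> phi a != 0.
Proof. by rewrite (raddf_eq0 _ phi_inj). Qed.

Lemma frac_lift_div a b : b != 0 -> lift (tf a / tf b) = phi a / phi b.
Proof.
move=> b0; rewrite /frac_lift.
have := tofrac_numden (tf a / tf b).
move: (\n_ _) (\d_ _) (denom_ratioP (repr (tf a / tf b))) => m e e0 /eqP.
rewrite eqr_div ?tofrac_eq0 // -!tofracM tofrac_eq => /eqP ae_mb.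
by apply/eqP; rewrite eqr_div ?phi_neq0 // -!rmorphM ae_mb.
Qed.

Lemma frac_lift_tofrac a : lift (tf a) = phi a.
Proof. by have := frac_lift_div a (oner_neq0 R); rewrite !rmorph1 !divr1. Qed.

Lemma frac_lift_is_zmod_morphism : zmod_morphism lift.
Proof.
elim/fraction_ind => a b b0; elim/fraction_ind => c e e0.
rewrite -mulNr -rmorphN addf_div ?tofrac_eq0 // -!rmorphM -rmorphD.
rewrite !frac_lift_div ?mulf_neq0 // -mulNr -rmorphN addf_div ?phi_neq0 //.
by rewrite rmorphD !rmorphM.
Qed.

Lemma frac_lift_is_monoid_morphism : monoid_morphism lift.
Proof.
split; first by rewrite -tofrac1 frac_lift_tofrac rmorph1.
elim/fraction_ind => a b b0; elim/fraction_ind => c e e0.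
rewrite mulf_div -!rmorphM !frac_lift_div ?mulf_neq0 // !rmorphM.
by rewrite mulf_div.
Qed.

HB.instance Definition _ := GRing.isZmodMorphism.Build _ _ lift
  frac_lift_is_zmod_morphism.
HB.instance Definition _ := GRing.isMonoidMorphism.Build _ _ lift
  frac_lift_is_monoid_morphism.

End FractionLift.

Section Reciprocal.
Variable K : fieldType.
Local Notation F := {fraction {poly K}}.
Local Notation tf := (@FracField.tofrac {poly K}).

Definition fracX : F := tf 'X.
Definition fracC : {rmorphism K -> F} := tf \o polyC.

Lemma fracX_neq0 : fracX != 0.
Proof. by rewrite tofrac_eq0 polyX_eq0. Qed.

Lemma tofrac_horner p : tf p = (map_poly fracC p).[fracX].
Proof. exact: (poly_initial tf p). Qed.

Lemma fracX_transcendental : ~ algebraicOver fracC fracX.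
Proof. by case=> p; rewrite /root -tofrac_horner tofrac_eq0 => /negPf ->. Qed.

Let fracXV_comm : commr_rmorph fracC fracX^-1.
Proof. by move=> c; apply: mulrC. Qed.

Definition recip_horner : {rmorphism {poly K} -> F} := horner_morph fracXV_comm.

Lemma recip_horner_inj : injective recip_horner.
Proof.
apply: raddf_inj => p /eqP p_root; apply/eqP/negPn/negP => p_neq0.
apply: fracX_transcendental; rewrite -[fracX]invrK; apply: algebraic_inv.
by exists p.
Qed.

Definition frac_recip : {rmorphism F -> F} := frac_lift recip_horner_inj.

Lemma frac_recip_tofrac p : frac_recip (tf p) = (map_poly fracC p).[fracX^-1].
Proof. exact: frac_lift_tofrac. Qed.

Lemma frac_recipC c : frac_recip (fracC c) = fracC c.
Proof. by rewrite /fracC /= frac_recip_tofrac map_polyC hornerC. Qed.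

Lemma frac_recipX : frac_recip fracX = fracX^-1.
Proof. by rewrite frac_recip_tofrac map_polyX hornerX. Qed.

Lemma frac_recipXn m : frac_recip (tf 'X^m) = fracX ^- m.
Proof. by rewrite tofracXn -/fracX rmorphXn frac_recipX exprVn. Qed.

Lemma frac_recipK : involutive frac_recip.
Proof.
have recip2_tofrac p : frac_recip (frac_recip (tf p)) = tf p.
  rewrite frac_recip_tofrac -horner_map fmorphV frac_recipX invrK.
  rewrite -map_poly_comp tofrac_horner; congr (_.[_]).
  by apply: eq_map_poly => c /=; rewrite frac_recipC.
elim/fraction_ind => a b _.
by rewrite (fmorph_div _ (tf a)) (fmorph_div _ (frac_recip (tf a))) !recip2_tofrac.
Qed.

Lemma frac_recip_sym_q q n i : (i <= n)%N ->
  frac_recip (tf (sym_q K q n i)) =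
    fracX ^- (\sum_(j < n) q ^ j)%N * tf (sym_q K q n (n - i)).
Proof.
move=> le_i_n; rewrite /sym_q !rmorph_sum mulr_sumr.
rewrite (reindex_inj (@setC_inj _)) /=; apply: eq_big => [S|S _].
  rewrite cardsCs setCK card_ord.
  have : (#|S| <= n)%N by rewrite -[X in (_ <= X)%N]card_ord max_card.
  by move: #|S| => s le_s_n; apply/eqP/eqP; lia.
rewrite frac_recipXn tofracXn [X in _ = fracX ^- X * _](bigID (mem (~: S))) /=.
have -> : (\sum_(j < n | j \notin ~: S) q ^ j = \sum_(j in S) q ^ j)%N.
  by apply: eq_bigl => j; rewrite in_setC negbK.
by rewrite exprD invfM mulfVK // expf_neq0 // fracX_neq0.
Qed.

End Reciprocal.

Section QuotientField.
Variables (F : fieldType) (P : {poly F}) (mi : monic_irreducible_poly P).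
Local Notation E := {poly %/ P with mi}.

Definition qfconst : {rmorphism F -> E} := in_qpoly P \o polyC.
Definition qfgen : E := in_qpoly P 'X.

Lemma in_qpoly_horner p : in_qpoly P p = (map_poly qfconst p).[qfgen].
Proof. exact: (poly_initial (in_qpoly P : {rmorphism _ -> E}) p). Qed.

Lemma in_qpolyK (x : E) : in_qpoly P x = x.
Proof. by apply: val_inj; rewrite /= Pdiv.Ring.rmodp_small // size_mk_monic. Qed.

Lemma qfpoly_horner (x : E) : x = (map_poly qfconst x).[qfgen].
Proof. by rewrite -in_qpoly_horner in_qpolyK. Qed.

Lemma qfgen_root : root (map_poly qfconst P) qfgen.
Proof.
rewrite /root -in_qpoly_horner; apply/eqP/val_inj => /=.
by rewrite (mk_monicE mi) Pdiv.RingMonic.rmodpp //; case: mi.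
Qed.

Lemma qfpoly_morph_cancel (R : nzRingType) (f : {rmorphism E -> R})
    (g : {rmorphism R -> E}) :
  (forall x, g (f (qfconst x)) = qfconst x) -> g (f qfgen) = qfgen -> cancel f g.
Proof.
move=> fg_const fg_gen x; rewrite {1}[x]qfpoly_horner -!horner_map fg_gen.
by rewrite -!map_poly_comp (eq_map_poly fg_const) -qfpoly_horner.
Qed.

Section Lift.
Variables (R : nzRingType) (g : {rmorphism {poly F} -> R}).
Hypothesis gP : g P = 0.

Definition qf_lift of g P = 0 := fun x : E => g x.
Local Notation lift := (qf_lift gP).

Lemma qf_lift_in_qpoly p : lift (in_qpoly P p) = g p.
Proof.
rewrite /qf_lift /= [in RHS](Pdiv.RingMonic.rdivp_eq (monic_mk_monic P) p).
by rewrite rmorphD rmorphM (mk_monicE mi) gP mulr0 add0r.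
Qed.

Lemma qf_lift_is_zmod_morphism : zmod_morphism lift.
Proof. by move=> x y; apply: rmorphB. Qed.

Lemma qf_lift_is_monoid_morphism : monoid_morphism lift.
Proof.
split; first by rewrite -in_qpoly1 qf_lift_in_qpoly rmorph1.
move=> x y; change (lift (in_qpoly P ((x : {poly F}) * y)) = lift x * lift y).
by rewrite qf_lift_in_qpoly rmorphM.
Qed.

HB.instance Definition _ := GRing.isZmodMorphism.Build _ _ lift
  qf_lift_is_zmod_morphism.
HB.instance Definition _ := GRing.isMonoidMorphism.Build _ _ lift
  qf_lift_is_monoid_morphism.

End Lift.
End QuotientField.

Lemma qfgen_expn (F : fieldType) (d : nat) (a : F)
  (mi : monic_irreducible_poly ('X^d - a%:P)) : qfgen mi ^+ d = qfconst mi a.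
Proof.
apply/eqP; rewrite -subr_eq0; have /rootP := qfgen_root mi.
by rewrite rmorphB /= map_polyXn map_polyC hornerD hornerN hornerXn hornerC => ->.
Qed.

Section KummerMorph.
Variables (F : fieldType) (d : nat) (a b : F).
Variables (mia : monic_irreducible_poly ('X^d - a%:P))
          (mib : monic_irreducible_poly ('X^d - b%:P)).
Variables (sigma : {rmorphism F -> F}) (c : F).
Hypothesis sigma_a : sigma a = c ^+ d * b.

Let kummer_comm : commr_rmorph (qfconst mib \o sigma) (qfconst mib c * qfgen mib).
Proof. by move=> x; apply: mulrC. Qed.

Local Notation kummer_horner := (horner_morph kummer_comm).

Lemma kummer_hornerC x : kummer_horner x%:P = qfconst mib (sigma x).
Proof. exact: horner_morphC. Qed.

Lemma kummer_hornerX : kummer_horner 'X = qfconst mib c * qfgen mib.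
Proof. exact: horner_morphX. Qed.

Lemma kummer_horner_root : kummer_horner ('X^d - a%:P) = 0.
Proof.
rewrite rmorphB rmorphXn /= kummer_hornerX kummer_hornerC sigma_a.
by rewrite exprMn qfgen_expn -rmorphXn -rmorphM subrr.
Qed.

Definition kummer_morph :
    {rmorphism {poly %/ 'X^d - a%:P with mia} -> {poly %/ 'X^d - b%:P with mib}} :=
  qf_lift kummer_horner_root.

Lemma kummer_morph_const x : kummer_morph (qfconst mia x) = qfconst mib (sigma x).
Proof. by rewrite -kummer_hornerC; apply: qf_lift_in_qpoly. Qed.

Lemma kummer_morph_gen : kummer_morph (qfgen mia) = qfconst mib c * qfgen mib.
Proof. by rewrite -kummer_hornerX; apply: qf_lift_in_qpoly. Qed.

End KummerMorph.

Arguments kummer_morph {F d a b} mia mib {sigma c} sigma_a.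

Section KummerIso.
Variables (F : fieldType) (d : nat) (a b : F).
Variables (mia : monic_irreducible_poly ('X^d - a%:P))
          (mib : monic_irreducible_poly ('X^d - b%:P)).
Variables (sigma : {rmorphism F -> F}) (c : F).
Hypotheses (sigmaK : involutive sigma) (sigma_c : sigma c * c = 1).
Hypothesis sigma_a : sigma a = c ^+ d * b.

Lemma kummer_sigma_swap : sigma b = c ^+ d * a.
Proof.
rewrite -[a]sigmaK sigma_a rmorphM rmorphXn mulrA -exprMn [c * _]mulrC.
by rewrite sigma_c expr1n mul1r.
Qed.

Lemma kummer_morphK :
  cancel (kummer_morph mia mib sigma_a) (kummer_morph mib mia kummer_sigma_swap).
Proof.
apply: qfpoly_morph_cancel => [x|].
  by rewrite !kummer_morph_const sigmaK.
by rewrite kummer_morph_gen rmorphM kummer_morph_const kummer_morph_gen mulrA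
  -rmorphM sigma_c rmorph1 mul1r.
Qed.

End KummerIso.

Arguments kummer_morphK {F d a b} mia mib {sigma c}.

Theorem kummer_iso (F : fieldType) (d : nat) (a b : F)
    (mia : monic_irreducible_poly ('X^d - a%:P))
    (mib : monic_irreducible_poly ('X^d - b%:P))
    (sigma : {rmorphism F -> F}) (c : F) :
  involutive sigma -> sigma c * c = 1 -> sigma a = c ^+ d * b ->
  exists f : {rmorphism {poly %/ 'X^d - a%:P with mia} ->
                        {poly %/ 'X^d - b%:P with mib}},
    bijective f /\ forall x, f (qfconst mia x) = qfconst mib (sigma x).
Proof.
move=> sigmaK sigma_c sigma_a.
have sigma_b := kummer_sigma_swap sigmaK sigma_c sigma_a.
exists (kummer_morph mia mib sigma_a); split; last exact: kummer_morph_const.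
exists (kummer_morph mib mia sigma_b); first exact: kummer_morphK.
have := kummer_morphK mib mia sigmaK sigma_c sigma_b.
by rewrite (eq_irrelevance (kummer_sigma_swap _ _ sigma_b) sigma_a).
Qed.

Lemma kum_degE q n : (1 < q)%N -> kum_deg q n = (\sum_(j < n) q ^ j)%N.
Proof.
by move=> q_gt1; rewrite /kum_deg subn1 predn_exp subn1 mulKn // -subn1 subn_gt0.
Qed.

Unset Implicit Arguments.

Theorem lemma4p26 (p k n : nat) (K : finFieldType)
  (hp : prime p) (hk : (0 < k)%N) (hn : (2 <= n)%N)
  (hK : #|K| = ((p ^ k) ^ n)%N)
  (i : nat) (hi1 : (1 <= i)%N) (hi2 : (i <= n - 1)%N)
  (mi1 : monic_irreducible_poly (kummer_poly K (p ^ k) n i))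
  (mi2 : monic_irreducible_poly (kummer_poly K (p ^ k) n (n - i))) :
  exists f : {rmorphism kumF mi1 -> kumF mi2},
    bijective f /\ forall c : K, f (kum_const mi1 c) = kum_const mi2 c.
Proof.
have q_gt1 : (1 < p ^ k)%N by rewrite -(expn0 p) ltn_exp2l // prime_gt1.
have i_le_n : (i <= n)%N by apply: leq_trans hi2 (leq_subr 1 n).
have recip_xV : frac_recip K (fracX K)^-1 * (fracX K)^-1 = 1.
  by rewrite fmorphV frac_recipX invrK mulfV // fracX_neq0.
have recip_sym : frac_recip K (FracField.tofrac (sym_q K (p ^ k) n i)) =
    (fracX K)^-1 ^+ kum_deg (p ^ k) n * FracField.tofrac (sym_q K (p ^ k) n (n - i)).
  by rewrite frac_recip_sym_q // kum_degE // exprVn.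
have [f [f_bij f_const]] := kummer_iso mi1 mi2 (@frac_recipK K) recip_xV recip_sym.
by exists f; split=> // c; rewrite [LHS]f_const frac_recipC.
Qed.
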